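(* Let $0<\nu<1$, $n\ge2$, and define K-functions as in the context. For the functions (a) $\tilde p_n^{(q)}(\underline{l})=\prod_{i=1}^nq^{(-1)^{l_i}}$ ($q\neq0$), (b) $\tilde p_n^{(N)}(\underline{l})=\big(\sum_{i=1}^n(-1)^{l_i}\big)^N$ ($N\ge0$ an integer), (c) $\tilde p_n^{(\pm)}(\underline{\theta},\underline{l})=\sum_{i=1}^ne^{\mp\theta_i}\sum_{i=1}^ne^{\pm z_i^{(l_i)}}$ with $z_i^{(l)}=\theta_i-\frac{i\pi}{2}(1-(-1)^l\nu)$, the corresponding K-functions satisfy, as $\operatorname{Re}\theta_1\to\infty$ with $\theta_2,\dots,\theta_n$ fixed, writing $\underline{\theta}'=(\theta_2,\dots,\theta_n)$: (a) $\tilde K_n^{(q)}(\underline{\theta})=\tilde K_1^{(q)}(\theta_1)\tilde K_{n-1}^{(q)}(\underline{\theta}')+O(e^{-\operatorname{Re}\theta_1})$; (b) $\tilde K_n^{(N)}(\underline{\theta})=\sum_{K=1}^{N-1}\binom{N}{K}\tilde K_1^{(K)}(\theta_1)\tilde K_{n-1}^{(N-K)}(\underline{\theta}')+O(e^{-\operatorname{Re}\theta_1})$; (c) $\tilde K_n^{\pm}(\underline{\theta})=\pm2i\sin\pi\nu\,\tilde K_{n-1}^{\pm}(\underline{\theta}')+O(e^{-\operatorname{Re}\theta_1})$. In particular $\tilde K_1^{(1)}(\theta)$ is constant and $\tilde K_n^{(1)}(\underline{\theta})=O(e^{-\operatorname{Re}\theta_1})$ for $n>1$.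
   Context: $\theta_{ij}=\theta_i-\theta_j$. For a function $\tilde p_m(\underline{\theta},\underline{l})$, $\underline{l}\in\{0,1\}^m$, its K-function is $$\tilde K_m(\underline{\theta})=\sum_{\underline{l}\in\{0,1\}^m}(-1)^{l_1+\dots+l_m}\prod_{1\le i<j\le m}\Big(1+(l_i-l_j)\frac{i\sin\pi\nu}{\sinh\theta_{ij}}\Big)\tilde p_m(\underline{\theta},\underline{l}).$$ *)

From HB Require Import structures.
From mathcomp Require Import all_boot all_order all_algebra.
From mathcomp Require Import complex.
From mathcomp Require Import reals sequences exp trigo.
Set Implicit Arguments. Unset Strict Implicit. Unset Printing Implicit Defensive.
Import Order.TTheory GRing.Theory Num.Theory.
Local Open Scope ring_scope.
Local Open Scope complex_scope.

Section Defs.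
Context {R : realType}.
Local Notation C := R[i].

Definition cexp (z : C) : C :=
  (expR (complex.Re z) * cos (complex.Im z)) +i* (expR (complex.Re z) * sin (complex.Im z)).

Definition csinh (z : C) : C := (cexp z - cexp (- z)) / 2.

(* l : {ffun 'I_m -> bool} encodes l in {0,1}^m (true = 1). *)
Definition bnat (b : bool) : C := (nat_of_bool b)%:R.

Definition Kfun (nu : R) (m : nat)
    (p : ('I_m -> C) -> {ffun 'I_m -> bool} -> C) (th : 'I_m -> C) : C :=
  \sum_(l : {ffun 'I_m -> bool})
     (-1) ^+ (\sum_(i < m) nat_of_bool (l i))%N
   * (\prod_(i < m) \prod_(j < m | (i < j)%N)
        (1 + (bnat (l i) - bnat (l j)) * ((0 +i* 1) * (sin (pi * nu))%:C) / csinh (th i - th j)))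
   * p th l.

Definition p_q (q : C) {m : nat} (th : 'I_m -> C) (l : {ffun 'I_m -> bool}) : C :=
  \prod_(i < m) (if l i then q^-1 else q).

Definition p_N (N : nat) {m : nat} (th : 'I_m -> C) (l : {ffun 'I_m -> bool}) : C :=
  (\sum_(i < m) (if l i then -1 else 1)) ^+ N.

Definition zl (nu : R) (t : C) (b : bool) : C :=
  t - ((0 +i* 1) * (pi / 2)%:C) * (1 - (if b then -1 else 1) * nu%:C).

(* (c) sign s (true = "+", false = "-"):
   p^(±)(th,l) = (sum_i e^(∓ th_i)) (sum_i e^(± z_i^(l_i))) *)
Definition sgnb (s : bool) : C := if s then 1 else -1.

Definition p_pm (nu : R) (s : bool) {m : nat} (th : 'I_m -> C) (l : {ffun 'I_m -> bool}) : C :=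
  (\sum_(i < m) cexp (- sgnb s * th i)) * (\sum_(i < m) cexp (sgnb s * zl nu (th i) (l i))).

Definition vcons (m : nat) (x : C) (v : 'I_m -> C) : 'I_m.+1 -> C :=
  fun i => match unlift ord0 i with Some j => v j | None => x end.

Definition bigO_Re (F : C -> C) : Prop :=
  exists c M : R, forall t : C, M < complex.Re t -> `|F t| <= (c * expR (- complex.Re t))%:C.

End Defs.

(* Removing the first point splits the sum defining K_n into a sum over its bit l_1 of
   (n-1)-point summands, each multiplied by the cross weight
     W = prod_(k >= 2) (1 + (l_1 - l_k) i sin(pi nu) / sinh(theta_1 - theta_k)),
   and W = 1 + e^(-theta_1) L + O(e^(-2 Re theta_1)) with L affine in l_1 and in the l_k.
   Expanding p_n in powers of e^(theta_1) therefore writes K_n, up to O(e^(-Re theta_1)),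
   as a combination of products of one-point and (n-1)-point K-functions plus multiples of
   the K-function of the constant 1.  The latter vanishes for every n >= 1: clearing the
   denominators sinh(theta_1 - theta_k) turns it into the value at e^(theta_1) of a
   polynomial of degree < 2(n-1), which by induction on n vanishes at the 2(n-1) points
   +-e^(theta_k), k >= 2. *)

From HB Require Import structures.
From mathcomp Require Import all_boot all_order all_algebra.
From mathcomp Require Import complex.
From mathcomp Require Import reals sequences exp trigo.
From mathcomp Require Import ring lra zify.
Import Order.TTheory GRing.Theory Num.Theory ComplexField.Normc.
Local Open Scope ring_scope.
Local Open Scope complex_scope.
Set Implicit Arguments. Unset Strict Implicit. Unset Printing Implicit Defensive.

Section ComplexExponential.
Context {R : realType}.
Local Notation C := R[i].

Lemma cexpD (u v : C) : cexp (u + v) = cexp u * cexp v.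
Proof.
case: u => a b; case: v => c d; rewrite /cexp /= expRD cosD sinD.
by apply/eqP; rewrite eq_complex /=; apply/andP; split; apply/eqP; ring.
Qed.

Lemma cexp0 : cexp 0 = 1 :> C.
Proof. by rewrite /cexp /= expR0 cos0 sin0 mulr1 mulr0. Qed.

Lemma cexp_neq0 (u : C) : cexp u != 0.
Proof.
apply/eqP => u0; have := cexpD u (- u).
by rewrite subrr cexp0 u0 mul0r => /eqP; rewrite oner_eq0.
Qed.

Lemma cexpN (u : C) : cexp (- u) = (cexp u)^-1.
Proof.
apply: (mulfI (cexp_neq0 u)); rewrite -cexpD subrr cexp0 divff //.
exact: cexp_neq0.
Qed.

Lemma normc_cexp (u : C) : normc (cexp u) = expR (complex.Re u).
Proof.
rewrite /normc /cexp /= !exprMn -mulrDr [_ + sin _ ^+ 2]cos2Dsin2 mulr1.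
by rewrite sqrtr_sqr ger0_norm // ltW // expR_gt0.
Qed.

Lemma csinhN (z : C) : csinh (- z) = - csinh z.
Proof. by rewrite /csinh opprK; ring. Qed.

Lemma csinh_subE (u v : C) :
  csinh (u - v) = (cexp u ^+ 2 - cexp v ^+ 2) / (2 * cexp u * cexp v).
Proof.
rewrite /csinh opprB !cexpD !cexpN.
by field; rewrite !cexp_neq0.
Qed.

End ComplexExponential.

Section BitInsertion.

Definition linsert m (j : 'I_m.+1) (b : bool) (l : {ffun 'I_m -> bool}) :
  {ffun 'I_m.+1 -> bool} := [ffun i => if unlift j i is Some k then l k else b].

Definition ldelete m (j : 'I_m.+1) (l : {ffun 'I_m.+1 -> bool}) : {ffun 'I_m -> bool} :=
  [ffun k => l (lift j k)].

Lemma linsert_at m j b l : @linsert m j b l j = b.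
Proof. by rewrite ffunE unlift_none. Qed.

Lemma linsert_lift m j b l k : @linsert m j b l (lift j k) = l k.
Proof. by rewrite ffunE liftK. Qed.

Lemma linsertK m j b l : ldelete j (@linsert m j b l) = l.
Proof. by apply/ffunP => k; rewrite ffunE linsert_lift. Qed.

Lemma ldeleteK m j (l : {ffun 'I_m.+1 -> bool}) : linsert j (l j) (ldelete j l) = l.
Proof. by apply/ffunP => i; rewrite ffunE; case: unliftP => [k ->|->] //; rewrite ffunE. Qed.

Lemma big_linsert (V : nmodType) m (j : 'I_m.+1) (F : {ffun 'I_m.+1 -> bool} -> V) :
  \sum_l F l = \sum_(b : bool) \sum_(l : {ffun 'I_m -> bool}) F (linsert j b l).
Proof.
rewrite pair_big /= (reindex (fun bl : bool * _ => linsert j bl.1 bl.2)) //=.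
exists (fun l : {ffun _ -> bool} => (l j, ldelete j l)) => [[b l] _ | l _] /=.
  by rewrite linsert_at linsertK.
by rewrite ldeleteK.
Qed.

Lemma ltn_lift n (j : 'I_n.+1) (i k : 'I_n) : (lift j i < lift j k)%N = (i < k)%N.
Proof. by rewrite /= /bump; case: (leqP j i); case: (leqP j k) => /=; lia. Qed.

End BitInsertion.

Section KFunction.
Context {R : realType}.
Local Notation C := R[i].
Variable a : C.

Definition lsign m (l : {ffun 'I_m -> bool}) : C := (-1) ^+ (\sum_(i < m) l i)%N.

Definition wfactor m (th : 'I_m -> C) (l : {ffun 'I_m -> bool}) (i j : 'I_m) : C :=
  1 + (bnat (l i) - bnat (l j)) * a / csinh (th i - th j).

Definition weight m (th : 'I_m -> C) (l : {ffun 'I_m -> bool}) : C :=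
  \prod_(i < m) \prod_(j < m | (i < j)%N) wfactor th l i j.

Definition kfun m (p : ('I_m -> C) -> {ffun 'I_m -> bool} -> C) (th : 'I_m -> C) : C :=
  \sum_l lsign l * weight th l * p th l.

Definition cross_weight m (x : C) (th : 'I_m -> C) (b : bool) (l : {ffun 'I_m -> bool}) : C :=
  \prod_(k < m) (1 + (bnat b - bnat (l k)) * a / csinh (x - th k)).

Definition ksum m (th : 'I_m -> C) (G : bool -> {ffun 'I_m -> bool} -> C) : C :=
  \sum_(b : bool) \sum_l (-1) ^+ b * lsign l * weight th l * G b l.

Definition sinh_separated m (th : 'I_m -> C) :=
  forall i j : 'I_m, i != j -> csinh (th i - th j) != 0.

Lemma wfactorC m th l i j : @wfactor m th l i j = wfactor th l j i.
Proof.
rewrite /wfactor -[th j - th i]opprB csinhN -[bnat (l j) - _]opprB mulNr invrN.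
by rewrite mulrN mulNr opprK.
Qed.

Lemma lsign_linsert m j b l : lsign (@linsert m j b l) = (-1) ^+ b * lsign l.
Proof.
rewrite /lsign (bigD1_ord j) //= linsert_at exprD.
by congr (_ * (_ ^+ _)); apply: eq_bigr => k _; rewrite linsert_lift.
Qed.

Lemma weight_linsert m (th : 'I_m.+1 -> C) j b l :
  weight th (linsert j b l) =
  cross_weight (th j) (fun k => th (lift j k)) b l * weight (fun k => th (lift j k)) l.
Proof.
rewrite /weight; under eq_bigr do rewrite big_mkcond (bigD1_ord j) //=.
rewrite (bigD1_ord j) //= ltnn mul1r big_split /= mulrA -big_split /=.
congr (_ * _).
  apply: eq_bigr => k _; rewrite mulrC.
  have := neq_lift j k; case: ltngtP => [_ _|_ _|e]; last by rewrite -(inj_eq val_inj) /= e eqxx.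
  - by rewrite mulr1 wfactorC /wfactor linsert_at linsert_lift.
  - by rewrite mul1r /wfactor linsert_at linsert_lift.
apply: eq_bigr => i _; rewrite [RHS]big_mkcond /=; apply: eq_bigr => k _.
by rewrite ltn_lift /wfactor !linsert_lift.
Qed.

Lemma kfun_linsert m p (th : 'I_m.+1 -> C) j :
  kfun p th = ksum (fun k => th (lift j k))
    (fun b l => cross_weight (th j) (fun k => th (lift j k)) b l * p th (linsert j b l)).
Proof.
rewrite /kfun (big_linsert j); apply: eq_bigr => b _; apply: eq_bigr => l _.
by rewrite lsign_linsert weight_linsert; ring.
Qed.

Lemma ksumE m (th : 'I_m -> C) G :
  ksum th G = \sum_l lsign l * weight th l * (G false l - G true l).
Proof. by rewrite /ksum big_bool -big_split; apply: eq_bigr => l _ /=; ring. Qed.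

Lemma ksum_affine m p (th : 'I_m -> C) G x y :
  (forall l, G false l - G true l = x * p th l + y) ->
  ksum th G = x * kfun p th + y * kfun (fun _ _ => 1) th.
Proof.
move=> Gdiff; rewrite ksumE /kfun !mulr_sumr -big_split; apply: eq_bigr => l _ /=.
by rewrite Gdiff; ring.
Qed.

Lemma ksumD m (th : 'I_m -> C) F G :
  ksum th (fun b l => F b l + G b l) = ksum th F + ksum th G.
Proof.
rewrite /ksum -big_split; apply: eq_bigr => b _.
by rewrite -big_split; apply: eq_bigr => l _ /=; ring.
Qed.

Lemma ksumB m (th : 'I_m -> C) F G :
  ksum th (fun b l => F b l - G b l) = ksum th F - ksum th G.
Proof.
rewrite /ksum -sumrB; apply: eq_bigr => b _.
by rewrite -sumrB; apply: eq_bigr => l _ /=; ring.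
Qed.

Lemma ksumZ m (th : 'I_m -> C) x F : ksum th (fun b l => x * F b l) = x * ksum th F.
Proof.
rewrite /ksum mulr_sumr; apply: eq_bigr => b _.
by rewrite mulr_sumr; apply: eq_bigr => l _ /=; ring.
Qed.

Lemma ksum_bit_indep m (th : 'I_m -> C) (g : {ffun 'I_m -> bool} -> C) :
  ksum th (fun _ l => g l) = 0.
Proof. by rewrite ksumE big1 // => l _; rewrite subrr mulr0. Qed.

Lemma ksum_sum m (th : 'I_m -> C) n (F : 'I_n -> bool -> {ffun 'I_m -> bool} -> C) :
  ksum th (fun b l => \sum_(i < n) F i b l) = \sum_(i < n) ksum th (F i).
Proof.
rewrite /ksum [RHS]exchange_big; apply: eq_bigr => b _ /=.
by rewrite [RHS]exchange_big; apply: eq_bigr => l _; rewrite mulr_sumr.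
Qed.

End KFunction.

Lemma poly_eq0_of_pm_roots (F : numDomainType) (P : {poly F}) m (y : 'I_m -> F) :
  (size P <= m.*2)%N -> injective (fun k => y k ^+ 2) -> (forall k, y k != 0) ->
  (forall k, root P (y k) /\ root P (- y k)) -> P = 0.
Proof.
move=> sizeP y2_inj y_neq0 rootP; apply/eqP/negPn/negP => P_neq0.
pose rs := [seq (-1) ^+ s.1 * y s.2 | s : bool * 'I_m].
have rs_uniq : uniq rs.
  rewrite map_inj_uniq ?enum_uniq // => -[b k] [b' k'] /= e.
  have kk : k = k' by apply: y2_inj; rewrite /= -[LHS]mul1r -(sqrr_sign _ b) -exprMn e
    exprMn sqrr_sign mul1r.
  by move: e; rewrite kk => /(mulIf (y_neq0 k')) /signr_inj ->.
have rs_roots : all (root P) rs.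
  by apply/allP => _ /mapP [[[] k] _ ->]; rewrite /= ?mulN1r ?mul1r; case: (rootP k).
have := max_poly_roots P_neq0 rs_roots rs_uniq.
by rewrite size_map -cardE card_prod card_bool card_ord mul2n ltnNge sizeP.
Qed.

Section Vanishing.
Context {R : realType}.
Local Notation C := R[i].
Variable a : C.

Definition cleared_factor (y c : C) : {poly C} :=
  'X^2 + (c * 2 * a * cexp y)%:P * 'X - (cexp y ^+ 2)%:P.

Lemma cleared_factor_monic_size y c :
  cleared_factor y c \is monic /\ size (cleared_factor y c) = 3%N.
Proof.
have small : (size ((c * 2 * a * cexp y)%:P * 'X - (cexp y ^+ 2)%:P)%R
               < size ('X^2 : {poly C}))%N.
  rewrite size_polyXn -polyCN size_MXaddC.
  by case: ifP => // _; rewrite !ltnS size_polyC_leq1.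
rewrite /cleared_factor -addrA monicE lead_coefDl // lead_coefXn size_polyDl //.
by rewrite size_polyXn.
Qed.

Lemma coef_prod_cleared_factor m (y c : 'I_m -> C) i : (m.*2 <= i)%N ->
  (\prod_(k < m) cleared_factor (y k) (c k))`_i = (i == m.*2)%:R.
Proof.
set Q := \prod_(k < m) _ => le_2m_i.
have Qmonic : Q \is monic.
  by apply: monic_prod => k _; case: (cleared_factor_monic_size (y k) (c k)).
have Qsize : size Q = m.*2.+1.
  rewrite size_prod => [|k _]; last first.
    by apply: monic_neq0; case: (cleared_factor_monic_size (y k) (c k)).
  under eq_bigr do rewrite (proj2 (cleared_factor_monic_size _ _)).
  by rewrite sum_nat_const card_ord; lia.
case: ltngtP le_2m_i => // [lt_2m_i|<-] _; first by rewrite nth_default ?Qsize.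
by move/monicP: Qmonic; rewrite lead_coefE Qsize.
Qed.

Definition cleared m (th : 'I_m -> C) : {poly C} :=
  \sum_(b : bool) \sum_l ((-1) ^+ b * lsign l * weight a th l)%:P *
    \prod_(k < m) cleared_factor (th k) (bnat b - bnat (l k)).

Lemma horner_cleared m (th : 'I_m -> C) z : (cleared th).[z] =
  ksum a th (fun b l => \prod_(k < m) (cleared_factor (th k) (bnat b - bnat (l k))).[z]).
Proof.
rewrite /cleared /ksum horner_sum; apply: eq_bigr => b _.
by rewrite horner_sum; apply: eq_bigr => l _; rewrite hornerCM horner_prod.
Qed.

Lemma size_cleared m (th : 'I_m -> C) : (size (cleared th) <= m.*2)%N.
Proof.
apply/leq_sizeP => i le_2m_i.
rewrite /cleared coef_sum -[RHS](ksum_bit_indep a th (fun _ => (i == m.*2)%:R)) /ksum.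
apply: eq_bigr => b _; rewrite coef_sum; apply: eq_bigr => l _.
by rewrite coefCM coef_prod_cleared_factor.
Qed.

Lemma sinh_separated_lift m (th : 'I_m.+1 -> C) j :
  sinh_separated th -> sinh_separated (fun k => th (lift j k)).
Proof. by move=> sep i k ik; apply: sep; rewrite (inj_eq (@lift_inj _ j)). Qed.

Lemma sinh_separated_cexp2 m (th : 'I_m -> C) i j : sinh_separated th -> i != j ->
  cexp (th i) ^+ 2 - cexp (th j) ^+ 2 != 0.
Proof. by move=> sep /sep; rewrite csinh_subE; apply: contra => /eqP ->; rewrite mul0r. Qed.

Lemma horner_cleared_factor_cexp x y c : csinh (x - y) != 0 ->
  (cleared_factor y c).[cexp x] = (cexp x ^+ 2 - cexp y ^+ 2) * (1 + c * a / csinh (x - y)).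
Proof.
rewrite csinh_subE => s0.
have D0 : cexp x ^+ 2 - cexp y ^+ 2 != 0 by apply: contra s0 => /eqP ->; rewrite mul0r.
by rewrite /cleared_factor !hornerE; field; rewrite D0 !cexp_neq0.
Qed.

Lemma horner_cleared_factorN y c z :
  (cleared_factor y c).[- z] = (cleared_factor y (- c)).[z].
Proof. by rewrite /cleared_factor !hornerE; ring. Qed.

Lemma horner_cleared_factor_sqr y c z : z ^+ 2 = cexp y ^+ 2 ->
  (cleared_factor y c).[z] = c * 2 * a * cexp y * z.
Proof. by move=> zy; rewrite /cleared_factor !hornerE zy; ring. Qed.

Lemma horner_cleared_cexp m (th : 'I_m.+1 -> C) j : sinh_separated th ->
  (cleared (fun k => th (lift j k))).[cexp (th j)] =
  (\prod_(k < m) (cexp (th j) ^+ 2 - cexp (th (lift j k)) ^+ 2)) * kfun a (fun _ _ => 1) th.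
Proof.
move=> sep; rewrite horner_cleared (kfun_linsert _ _ _ j) /ksum mulr_sumr.
apply: eq_bigr => b _; rewrite mulr_sumr; apply: eq_bigr => l _.
rewrite (eq_bigr _ (fun k _ => horner_cleared_factor_cexp _ (sep _ _ (neq_lift j k)))).
by rewrite big_split /= /cross_weight; ring.
Qed.

Definition paired_factor m (th : 'I_m.+1 -> C) j z (c b e : bool) (k : 'I_m) : C :=
  (1 + (bnat c - bnat e) * a / csinh (th j - th (lift j k))) *
  (cleared_factor (th (lift j k)) (bnat b - bnat e)).[z].

Lemma horner_cleared_sqr m (th : 'I_m.+1 -> C) j z : z ^+ 2 = cexp (th j) ^+ 2 ->
  (cleared th).[z] = 2 * a * cexp (th j) * z *
    kfun a (fun _ l => \prod_(k < m) paired_factor th j z true false (l k) k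
                     - \prod_(k < m) paired_factor th j z false true (l k) k)
      (fun k => th (lift j k)).
Proof.
set th' := fun k => th (lift j k) => zj.
transitivity (\sum_(b : bool) \sum_(c : bool) \sum_(l : {ffun 'I_m -> bool})
  (-1) ^+ b * ((-1) ^+ c * lsign l) * (cross_weight a (th j) th' c l * weight a th' l) *
  ((bnat b - bnat c) * 2 * a * cexp (th j) * z *
   \prod_(k < m) (cleared_factor (th' k) (bnat b - bnat (l k))).[z])).
  rewrite horner_cleared; apply: eq_bigr => b _; rewrite (big_linsert j).
  apply: eq_bigr => c _; apply: eq_bigr => l _.
  rewrite lsign_linsert weight_linsert (bigD1_ord j) //= linsert_at.
  rewrite horner_cleared_factor_sqr //; congr (_ * _ * (_ * _)).
  by apply: eq_bigr => k _; rewrite linsert_lift.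
rewrite /kfun !big_bool /= mulr_sumr -!big_split /=; apply: eq_bigr => l _.
by rewrite /paired_factor /cross_weight !big_split /= /bnat /=; ring.
Qed.

Lemma cleared_root_cexp m (th : 'I_m.+1 -> C) j :
  sinh_separated th -> root (cleared th) (cexp (th j)).
Proof.
move=> sep; apply/rootP; rewrite (horner_cleared_sqr (j := j)) // /kfun big1 ?mulr0 // => l _.
suff -> : \prod_(k < m) paired_factor th j (cexp (th j)) true false (l k) k =
          \prod_(k < m) paired_factor th j (cexp (th j)) false true (l k) k.
  by rewrite subrr mulr0.
apply: eq_bigr => k _; rewrite /paired_factor.
by rewrite !horner_cleared_factor_cexp ?sep ?neq_lift //; ring.
Qed.

Lemma cleared_root_Ncexp m (th : 'I_m.+1 -> C) j : sinh_separated th ->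
  ((0 < m)%N -> kfun a (fun _ _ => 1) (fun k => th (lift j k)) = 0) ->
  root (cleared th) (- cexp (th j)).
Proof.
move=> sep K0; apply/rootP; rewrite (horner_cleared_sqr (j := j)) ?sqrrN //.
set z := - cexp (th j).
(* At [- cexp (th j)] the paired factors forget the bit [e], so the sum over [l] is a
   multiple of the K-function of 1 on the remaining points. *)
have pf c b e k : c != b -> paired_factor th j z c b e k = paired_factor th j z c b false k.
  rewrite /paired_factor /z !horner_cleared_factorN.
  rewrite !horner_cleared_factor_cexp ?sep ?neq_lift //.
  by case: c b e => [] [] [] //= _; rewrite /bnat /=; ring.
set cst := \prod_(k < m) paired_factor th j z true false false k
         - \prod_(k < m) paired_factor th j z false true false k.
have -> : kfun a (fun _ l => \prod_(k < m) paired_factor th j z true false (l k) k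
                     - \prod_(k < m) paired_factor th j z false true (l k) k)
      (fun k => th (lift j k)) = kfun a (fun _ _ => 1) (fun k => th (lift j k)) * cst.
  rewrite /kfun mulr_suml; apply: eq_bigr => l _; rewrite mulr1 /cst.
  by congr (_ * (_ - _)); apply: eq_bigr => k _; apply: pf.
case: (posnP m) => [m0|/K0 ->]; last by rewrite mul0r mulr0.
by subst m; rewrite /cst !big_ord0 subrr !mulr0.
Qed.

Lemma kfun_single p (th : 'I_1 -> C) :
  kfun a p th = p th [ffun => false] - p th [ffun => true].
Proof.
rewrite /kfun (big_linsert ord0) big_bool /=.
have single b : [ffun => b] = linsert ord0 b ([ffun => false] : {ffun 'I_0 -> bool}).
  by apply/ffunP => i; rewrite (ord1 i) linsert_at ffunE.
have unique_l : (fun _ : {ffun 'I_0 -> bool} => true) =1 pred1 [ffun => false].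
  by move=> l; apply/esym/eqP/ffunP => -[].
have no_pair (i : 'I_1) : (@ord0 0 < i)%N = false by rewrite (ord1 i).
rewrite !(big_pred1 _ unique_l) !single !lsign_linsert /lsign /weight !big_ord0 !big_ord1.
rewrite !(big_pred0 _ _ _ _ no_pair).
by rewrite /= expr0 expr1; ring.
Qed.

Lemma kfun1_eq0 m (th : 'I_m -> C) : (0 < m)%N -> sinh_separated th ->
  kfun a (fun _ _ => 1) th = 0.
Proof.
elim/ltn_ind: m th => -[//|[|m] IH] th _ sep; first by rewrite kfun_single subrr.
set th' := fun k => th (lift ord0 k).
have sep' : sinh_separated th' by apply: sinh_separated_lift.
have cleared0 : cleared th' = 0.
  apply: (@poly_eq0_of_pm_roots _ _ _ (fun k => cexp (th' k))) => [|k k' /eqP|k|k].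
  - exact: size_cleared.
  - by apply: contraTeq => /(sinh_separated_cexp2 sep'); rewrite subr_eq0.
  - exact: cexp_neq0.
  split; first exact: cleared_root_cexp.
  by apply: cleared_root_Ncexp => // m_gt0; apply: IH => //; apply: sinh_separated_lift.
have := horner_cleared_cexp ord0 sep; rewrite cleared0 horner0 => /esym/eqP.
rewrite mulf_eq0 => /orP [/prodf_eq0 [k _]|/eqP //].
by rewrite (negbTE (sinh_separated_cexp2 sep (neq_lift ord0 k))).
Qed.

End Vanishing.

Section Asymptotics.
Context {R : realType}.
Local Notation C := R[i].
Local Notation Re := complex.Re.

Lemma normc_ge0 (z : C) : 0 <= normc z.
Proof. by case: z => x y; apply: sqrtr_ge0. Qed.

Lemma norm_normc (z : C) : `|z| = (normc z)%:C.
Proof. by case: z => x y; rewrite normc_def. Qed.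

Definition bigO_expN (k : nat) (F : C -> C) :=
  exists c M : R, forall t : C, M < Re t -> normc (F t) <= c * expR (- Re t) ^+ k.

Lemma bigO_expN_near k (F G : C -> C) (M : R) :
  (forall t, M < Re t -> F t = G t) -> bigO_expN k F -> bigO_expN k G.
Proof.
move=> FG [c [N FO]]; exists c, (Num.max M N) => t; rewrite gt_max => /andP [Mt Nt].
by rewrite -FG //; apply: FO.
Qed.

Lemma eq_bigO_expN k (F G : C -> C) : F =1 G -> bigO_expN k F -> bigO_expN k G.
Proof. by move=> FG; apply: (@bigO_expN_near _ _ _ 0) => t _. Qed.

Lemma bigO_expN0 k : bigO_expN k (fun _ => 0).
Proof. by exists 0, 0 => t _; rewrite normc0 mul0r. Qed.

Lemma bigO_expN_cst (c : C) : bigO_expN 0 (fun _ => c).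
Proof. by exists (normc c), 0 => t _; rewrite expr0 mulr1. Qed.

Lemma bigO_expND k (F G : C -> C) :
  bigO_expN k F -> bigO_expN k G -> bigO_expN k (fun t => F t + G t).
Proof.
move=> [c1 [M1 FO]] [c2 [M2 GO]]; exists (c1 + c2), (Num.max M1 M2) => t.
rewrite gt_max => /andP [M1t M2t]; apply: (le_trans (le_normcD _ _)).
by rewrite mulrDl lerD ?FO ?GO.
Qed.

Lemma bigO_expN_sum k (I : Type) (r : seq I) (F : I -> C -> C) :
  (forall i, bigO_expN k (F i)) -> bigO_expN k (fun t => \sum_(i <- r) F i t).
Proof.
move=> FO; elim: r => [|i r IH]; first by apply: eq_bigO_expN (bigO_expN0 k) => t; rewrite big_nil.
by apply: eq_bigO_expN (bigO_expND (FO i) IH) => t; rewrite big_cons.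
Qed.

Lemma bigO_expNM j k (F G : C -> C) :
  bigO_expN j F -> bigO_expN k G -> bigO_expN (j + k) (fun t => F t * G t).
Proof.
move=> [c1 [M1 FO]] [c2 [M2 GO]]; exists (c1 * c2), (Num.max M1 M2) => t.
rewrite gt_max normcM exprD => /andP [M1t M2t].
by rewrite mulrACA; apply: ler_pM; rewrite ?normc_ge0 ?FO ?GO.
Qed.

Lemma bigO_expN_weaken k F : bigO_expN k.+1 F -> bigO_expN k F.
Proof.
move=> [c [M FO]]; exists `|c|, (Num.max M 0) => t; rewrite gt_max => /andP [Mt t_gt0].
have e_ge0 : 0 <= expR (- Re t) by rewrite ltW ?expR_gt0.
have e_le1 : expR (- Re t) <= 1 by rewrite -expR0 ler_expR lerNl oppr0 ltW.
apply: (le_trans (FO t Mt)); rewrite exprS mulrA ler_wpM2r ?exprn_ge0 //.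
by rewrite (le_trans (ler_norm _)) // normrM (ger0_norm e_ge0) ler_piMr.
Qed.

Lemma bigO_expN_cexpM k F : bigO_expN k.+1 F -> bigO_expN k (fun t => cexp t * F t).
Proof.
move=> [c [M FO]]; exists c, M => t Mt; rewrite normcM normc_cexp.
rewrite -ler_pdivlMl ?expR_gt0 //; apply: (le_trans (FO t Mt)).
by rewrite exprS expRN mulrCA.
Qed.

Lemma bigO_expN_cexpN : bigO_expN 1 (fun t => cexp (- t)).
Proof. by exists 1, 0 => t _; rewrite normc_cexp expr1 mul1r; case: t. Qed.

Lemma bigO_Re_expN1 F : bigO_expN 1 F -> bigO_Re F.
Proof.
move=> [c [M FO]]; exists c, M => t Mt; have := FO t Mt.
by rewrite expr1 -lecR -norm_normc.
Qed.

Lemma normc_cexp2B_ge (y t : C) : normc y < Re t ->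
  expR (Re t) ^+ 2 / 2 < normc (cexp t ^+ 2 - y).
Proof.
move=> yt; set X := expR (Re t).
have X2 : X ^+ 2 = expR (Re t + Re t) by rewrite expRD expr2.
have big : 2 * normc y < X ^+ 2.
  by rewrite X2; apply: lt_le_trans (expR_ge1Dx _); have := normc_ge0 y; lra.
have := le_normcD (cexp t ^+ 2 - y) y; rewrite subrK expr2 normcM normc_cexp -expr2 -/X.
lra.
Qed.

Lemma bigO_expN_inv_cexp2B (y : C) : bigO_expN 2 (fun t => (cexp t ^+ 2 - y)^-1).
Proof.
exists 2, (normc y) => t yt; have D_ge := normc_cexp2B_ge yt.
have X_gt0 : 0 < expR (Re t) ^+ 2 / 2 by rewrite divr_gt0 ?exprn_gt0 ?expR_gt0.
rewrite normcV expRN exprVn -[2 * _]invrK invfM invrK mulrC.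
by rewrite lef_pV2 ?posrE ?X_gt0 ?(lt_trans X_gt0 D_ge) ?(ltW D_ge).
Qed.

Lemma bigO_expN_inv_csinh (y : C) : bigO_expN 1 (fun t => (csinh (t - y))^-1).
Proof.
apply: eq_bigO_expN (bigO_expN_cexpM (bigO_expNM (bigO_expN_cst (2 * cexp y))
  (bigO_expN_inv_cexp2B (cexp y ^+ 2)))) => t.
by rewrite csinh_subE invf_div; ring.
Qed.

Lemma bigO_expN_cexp_div_csinh (y : C) :
  bigO_expN 2 (fun t => cexp t / csinh (t - y) - 2 * cexp y).
Proof.
apply: (@bigO_expN_near _ _ _ (normc (cexp y ^+ 2)) _ (bigO_expNM (bigO_expN_cst (2 * cexp y ^+ 3))
  (bigO_expN_inv_cexp2B (cexp y ^+ 2)))) => t /normc_cexp2B_ge D_ge.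
have D0 : cexp t ^+ 2 - cexp y ^+ 2 != 0.
  apply: contraTneq D_ge => ->; rewrite normc0 -leNgt divr_ge0 ?exprn_ge0 //.
  exact: ltW (expR_gt0 _).
by rewrite csinh_subE; field; rewrite D0 !cexp_neq0.
Qed.

Lemma bigO_expN_prod1D n (eps : 'I_n -> C -> C) : (forall k, bigO_expN 1 (eps k)) ->
  [/\ bigO_expN 0 (fun t => \prod_(k < n) (1 + eps k t)),
      bigO_expN 1 (fun t => \prod_(k < n) (1 + eps k t) - 1) &
      bigO_expN 2 (fun t => \prod_(k < n) (1 + eps k t) - 1 - \sum_(k < n) eps k t)].
Proof.
elim: n eps => [|n IH] eps epsO.
  split; [apply: eq_bigO_expN (bigO_expN_cst 1) | apply: eq_bigO_expN (bigO_expN0 1)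
         | apply: eq_bigO_expN (bigO_expN0 2)] => t; by rewrite !big_ord0 ?subrr ?subr0.
have [P0 P1 P2] := IH (fun k => eps (widen_ord (leqnSn n) k)) (fun k => epsO _).
have Q1 : bigO_expN 1 (fun t => \prod_(k < n.+1) (1 + eps k t) - 1).
  apply: eq_bigO_expN (bigO_expND P1 (bigO_expNM P0 (epsO ord_max))) => t.
  by rewrite big_ord_recr /=; ring.
split => //.
  by apply: eq_bigO_expN (bigO_expND (bigO_expN_weaken Q1) (bigO_expN_cst 1)) => t; ring.
apply: eq_bigO_expN (bigO_expND P2 (bigO_expNM P1 (epsO ord_max))) => t.
by rewrite !big_ord_recr /=; ring.
Qed.

End Asymptotics.

Section Expansion.
Context {R : realType}.
Local Notation C := R[i].
Variable a : C.

Definition cross_coef m (th : 'I_m -> C) (b : bool) (l : {ffun 'I_m -> bool}) : C :=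
  \sum_(k < m) (bnat b - bnat (l k)) * a * (2 * cexp (th k)).

Lemma cross_weight_asymptotics m (th : 'I_m -> C) b l :
  [/\ bigO_expN 0 (fun t => cross_weight a t th b l),
      bigO_expN 1 (fun t => cross_weight a t th b l - 1) &
      bigO_expN 1 (fun t => cexp t * (cross_weight a t th b l - 1) - cross_coef th b l)].
Proof.
have epsO k : bigO_expN 1 (fun t => (bnat b - bnat (l k)) * a / csinh (t - th k)).
  exact: bigO_expNM (bigO_expN_cst _) (bigO_expN_inv_csinh (th k)).
have [W0 W1 W2] := bigO_expN_prod1D epsO.
split => //.
have linO : bigO_expN 1 (fun t => \sum_(k < m)
    (bnat b - bnat (l k)) * a * (cexp t / csinh (t - th k) - 2 * cexp (th k))).
  apply: bigO_expN_sum => k; apply: bigO_expN_weaken.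
  exact: bigO_expNM (bigO_expN_cst _) (bigO_expN_cexp_div_csinh (th k)).
apply: eq_bigO_expN (bigO_expND (bigO_expN_cexpM W2) linO) => t /=.
have -> : \sum_(k < m) (bnat b - bnat (l k)) * a * (cexp t / csinh (t - th k) - 2 * cexp (th k)) =
  cexp t * \sum_(k < m) (bnat b - bnat (l k)) * a / csinh (t - th k) - cross_coef th b l.
  by rewrite mulr_sumr -sumrB; apply: eq_bigr => k _; ring.
by rewrite /cross_weight; ring.
Qed.

Lemma vcons0 m (t : C) (th : 'I_m -> C) : vcons t th ord0 = t.
Proof. by rewrite /vcons unlift_none. Qed.

Lemma vcons_lift m (t : C) (th : 'I_m -> C) k : vcons t th (lift ord0 k) = th k.
Proof. by rewrite /vcons liftK. Qed.

Lemma kfun_vcons m p (th : 'I_m -> C) t : kfun a p (vcons t th) =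
  ksum a th (fun b l => cross_weight a t th b l * p (vcons t th) (linsert ord0 b l)).
Proof.
have th_lift : (fun k => vcons t th (lift ord0 k)) = th := boolp.funext (vcons_lift t th).
by rewrite (kfun_linsert _ _ _ ord0) vcons0 th_lift.
Qed.

Lemma bigO_expN_ksum k m (th : 'I_m -> C) (G : bool -> {ffun 'I_m -> bool} -> C -> C) :
  (forall b l, bigO_expN k (G b l)) -> bigO_expN k (fun t => ksum a th (fun b l => G b l t)).
Proof.
move=> GO; apply: bigO_expN_sum => b; apply: bigO_expN_sum => l.
exact: bigO_expNM (bigO_expN_cst _) (GO b l).
Qed.

Lemma kfun_vcons_expansion m p (th : 'I_m -> C) (c0 c1 c2 : bool -> {ffun 'I_m -> bool} -> C) :
  (forall t b l, p (vcons t th) (linsert ord0 b l) =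
                 c0 b l + cexp t * c1 b l + cexp (- t) * c2 b l) ->
  bigO_expN 1 (fun t => kfun a p (vcons t th) -
    (ksum a th c0 + cexp t * ksum a th c1 + ksum a th (fun b l => cross_coef th b l * c1 b l))).
Proof.
move=> pE.
have termO b l : bigO_expN 1 (fun t => (cross_weight a t th b l - 1) * c0 b l
    + (cexp t * (cross_weight a t th b l - 1) - cross_coef th b l) * c1 b l
    + cexp (- t) * cross_weight a t th b l * c2 b l).
  have [W0 W1 W2] := cross_weight_asymptotics th b l.
  apply: bigO_expND; first apply: bigO_expND.
  - exact: bigO_expNM W1 (bigO_expN_cst _).
  - exact: bigO_expNM W2 (bigO_expN_cst _).
  - exact: bigO_expNM (bigO_expNM bigO_expN_cexpN W0) (bigO_expN_cst _).
apply: eq_bigO_expN (bigO_expN_ksum th termO) => t.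
rewrite kfun_vcons -ksumZ -!ksumD -ksumB; apply: eq_bigr => b _; apply: eq_bigr => l _.
by rewrite pE; ring.
Qed.

Lemma kfun_vcons_bounded m p (th : 'I_m -> C) (c0 : bool -> {ffun 'I_m -> bool} -> C) :
  (forall t b l, p (vcons t th) (linsert ord0 b l) = c0 b l) ->
  bigO_expN 1 (fun t => kfun a p (vcons t th) - ksum a th c0).
Proof.
move=> pE; have termO b l : bigO_expN 1 (fun t => (cross_weight a t th b l - 1) * c0 b l).
  by case: (cross_weight_asymptotics th b l) => _ W1 _; apply: bigO_expNM W1 (bigO_expN_cst _).
apply: eq_bigO_expN (bigO_expN_ksum th termO) => t.
rewrite kfun_vcons -ksumB; apply: eq_bigr => b _; apply: eq_bigr => l _.
by rewrite pE; ring.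
Qed.

End Expansion.

Section KFunctionAsymptotics.
Context {R : realType}.
Local Notation C := R[i].
Variable a : C.

Lemma kfun_q_asymptotics m (th : 'I_m -> C) q :
  bigO_expN 1 (fun t => kfun a (p_q q) (vcons t th)
                        - kfun a (p_q q) (fun _ : 'I_1 => t) * kfun a (p_q q) th).
Proof.
apply: eq_bigO_expN
  (@kfun_vcons_bounded _ a _ (p_q q) th (fun b l => (if b then q^-1 else q) * p_q q th l) _)
  => [t|t b l].
  rewrite (@ksum_affine _ _ _ (p_q q) _ _ (q - q^-1) 0) => [|l]; last by ring.
  by rewrite kfun_single /p_q !big_ord1 !ffunE /=; ring.
rewrite /p_q big_ord_recl linsert_at; congr (_ * _).
by apply: eq_bigr => k _; rewrite linsert_lift.
Qed.

Lemma sum_ord_inner (V : zmodType) N (u : nat -> V) :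
  u 0%N = 0 -> u N = 0 -> \sum_(i < N.+1) u i = \sum_(1 <= i < N) u i.
Proof.
move=> u0; case: N => [|N] uN; first by rewrite big_ord1 u0 big_geq.
by rewrite big_ord_recl u0 add0r big_ord_recr /= uN addr0 big_add1 big_mkord.
Qed.

Lemma kfun_N_asymptotics m (th : 'I_m -> C) N : (0 < m)%N -> sinh_separated th ->
  bigO_expN 1 (fun t => kfun a (p_N N) (vcons t th) - \sum_(1 <= K < N)
    'C(N, K)%:R * kfun a (p_N K) (fun _ : 'I_1 => t) * kfun a (p_N (N - K)) th).
Proof.
move=> m_gt0 sep; apply: eq_bigO_expN (@kfun_vcons_bounded _ a _ (p_N N) th
  (fun b l => \sum_(i < N.+1) 'C(N, i)%:R * ((if b then -1 else 1) ^+ i * p_N (N - i) th l)) _)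
  => [t|t b l]; last first.
  rewrite /p_N big_ord_recl linsert_at addrC exprDn; apply: eq_bigr => i _.
  by under eq_bigr do rewrite linsert_lift; rewrite mulr_natl mulrC.
pose u K := 'C(N, K)%:R * kfun a (p_N K) (fun _ : 'I_1 => t) * kfun a (p_N (N - K)) th.
have ksum_term i : ksum a th (fun b l => 'C(N, i)%:R *
    ((if b then -1 else 1) ^+ i * p_N (N - i) th l)) = u i.
  rewrite ksumZ (@ksum_affine _ _ _ (p_N (N - i)) _ _ (1 ^+ i - (-1) ^+ i) 0) => [|l]; last by ring.
  by rewrite /u kfun_single /p_N !big_ord1 !ffunE /=; ring.
rewrite ksum_sum; under eq_bigr do rewrite ksum_term; rewrite sum_ord_inner //.
  by rewrite /u kfun_single /p_N !expr0 subrr mulr0 mul0r.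
rewrite /u subnn.
have -> : kfun a (p_N 0) th = kfun a (fun _ _ => 1) th by [].
by rewrite kfun1_eq0 // mulr0.
Qed.

Lemma ksum_affine0 m p (th : 'I_m -> C) G x y : (0 < m)%N -> sinh_separated th ->
  (forall l, G false l - G true l = x * p th l + y) -> ksum a th G = x * kfun a p th.
Proof. by move=> m_gt0 sep /(@ksum_affine _ a) ->; rewrite kfun1_eq0 // mulr0 addr0. Qed.

Variable nu : R.

Definition omega (s b : bool) : C := cexp (sgnb s * zl nu 0 b).

Definition pm_left s m (th : 'I_m -> C) : C := \sum_(k < m) cexp (- sgnb s * th k).

Definition pm_right s m (th : 'I_m -> C) (l : {ffun 'I_m -> bool}) : C :=
  \sum_(k < m) cexp (sgnb s * th k) * omega s (l k).

Lemma cexp_zl s t b : cexp (sgnb s * zl nu t b) = cexp (sgnb s * t) * omega s b.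
Proof. by rewrite /omega -cexpD /zl; congr cexp; ring. Qed.

Lemma p_pmE s m (th : 'I_m -> C) l : p_pm nu s th l = pm_left s th * pm_right s th l.
Proof. by rewrite /p_pm; congr (_ * _); apply: eq_bigr => k _; rewrite cexp_zl. Qed.

Lemma p_pm_vcons s m (th : 'I_m -> C) t b l :
  p_pm nu s (vcons t th) (linsert ord0 b l) =
  (cexp (- sgnb s * t) + pm_left s th) * (cexp (sgnb s * t) * omega s b + pm_right s th l).
Proof.
rewrite p_pmE /pm_left /pm_right !big_ord_recl vcons0 linsert_at.
by congr ((_ + _) * (_ + _)); apply: eq_bigr => k _; rewrite vcons_lift ?linsert_lift.
Qed.

Lemma cross_coef_omega m (th : 'I_m -> C) l :
  cross_coef a th false l * omega true false - cross_coef a th true l * omega true true =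
  2 * a * pm_right true th l
  - 2 * a * (omega true false + omega true true) * \sum_(k < m) cexp (th k).
Proof.
rewrite /cross_coef /pm_right !mulr_suml !mulr_sumr -!sumrB; apply: eq_bigr => k _.
by rewrite /sgnb mul1r; case: (l k); rewrite /bnat /=; ring.
Qed.

Lemma cross_coefB m (th : 'I_m -> C) l :
  cross_coef a th false l - cross_coef a th true l = - 2 * a * pm_left false th.
Proof.
rewrite /cross_coef /pm_left mulr_sumr -sumrB; apply: eq_bigr => k _.
by rewrite /sgnb opprK mul1r /bnat /=; ring.
Qed.

Lemma kfun_pm_asymptotics m (th : 'I_m -> C) s : (0 < m)%N -> sinh_separated th ->
  bigO_expN 1 (fun t => kfun a (p_pm nu s) (vcons t th) - sgnb s * 2 * a * kfun a (p_pm nu s) th).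
Proof.
move=> m_gt0 sep.
have ksum0 G y : (forall l, G false l - G true l = y) -> ksum a th G = 0.
  move=> Gdiff; rewrite (@ksum_affine0 _ (p_pm nu s) _ _ 0 y) ?mul0r // => l.
  by rewrite Gdiff; ring.
have c0_eq0 : ksum a th (fun b l => omega s b + pm_left s th * pm_right s th l) = 0.
  by apply: (ksum0 _ (omega s false - omega s true)) => l; ring.
case: s ksum0 c0_eq0 => ksum0 c0_eq0.
  apply: eq_bigO_expN (@kfun_vcons_expansion _ a _ (p_pm nu true) th
    (fun b l => omega true b + pm_left true th * pm_right true th l)
    (fun b _ => pm_left true th * omega true b) (fun _ l => pm_right true th l) _)
    => [t|t b l]; last first.
    by rewrite p_pm_vcons /sgnb mulN1r mul1r cexpN; field; rewrite cexp_neq0.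
  rewrite c0_eq0 (ksum0 _ (pm_left true th * (omega true false - omega true true))) => [|l];
    last by ring.
  rewrite (@ksum_affine0 _ (p_pm nu true) _ _ (2 * a) (- 2 * a *
    (omega true false + omega true true) * (\sum_(k < m) cexp (th k)) * pm_left true th)) //
    => [|l]; first by rewrite /sgnb; ring.
  transitivity (pm_left true th * (cross_coef a th false l * omega true false
                                   - cross_coef a th true l * omega true true)); first by ring.
  by rewrite cross_coef_omega p_pmE; ring.
apply: eq_bigO_expN (@kfun_vcons_expansion _ a _ (p_pm nu false) th
  (fun b l => omega false b + pm_left false th * pm_right false th l)
  (fun _ l => pm_right false th l) (fun b _ => pm_left false th * omega false b) _)
  => [t|t b l]; last first.
  by rewrite p_pm_vcons /sgnb opprK mul1r mulN1r cexpN; field; rewrite cexp_neq0.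
rewrite c0_eq0 ksum_bit_indep (@ksum_affine0 _ (p_pm nu false) _ _ (- 2 * a) 0) // => [|l].
  by rewrite /sgnb; ring.
by rewrite -mulrBl cross_coefB p_pmE; ring.
Qed.

End KFunctionAsymptotics.

Unset Implicit Arguments.
Theorem lemma3 (R : realType) (nu : R) (hnu0 : 0 < nu) (hnu1 : nu < 1)
  (m : nat) (hm : (1 <= m)%N) (th' : 'I_m -> R[i])
  (hth' : forall i j : 'I_m, i != j -> csinh (th' i - th' j) != 0) :
  (* (a) *)
  (forall q : R[i], q != 0 ->
     bigO_Re (fun t => Kfun nu (p_q q) (vcons t th')
                       - Kfun nu (p_q q) (fun _ : 'I_1 => t) * Kfun nu (p_q q) th'))
  /\
  (* (b) *)
  (forall N : nat,
     bigO_Re (fun t => Kfun nu (p_N N) (vcons t th')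
                       - \sum_(1 <= K < N)
                           'C(N, K)%:R * Kfun nu (p_N K) (fun _ : 'I_1 => t)
                                       * Kfun nu (p_N (N - K)) th'))
  /\
  (* (c) *)
  (forall s : bool,
     bigO_Re (fun t => Kfun nu (p_pm nu s) (vcons t th')
                       - sgnb s * 2%:R * (0 +i* 1) * (sin (pi * nu))%:C * Kfun nu (p_pm nu s) th'))
  /\
  (* in particular *)
  (exists c : R[i], forall t : R[i], Kfun nu (p_N 1) (fun _ : 'I_1 => t) = c)
  /\
  bigO_Re (fun t => Kfun nu (p_N 1) (vcons t th')).
Proof.
set a : R[i] := (0 +i* 1) * (sin (pi * nu))%:C.
have kfunE p th : Kfun nu p th = kfun a p th by [].
(* The estimates hold for every value of [a] and every [q], so neither the bounds on [nu]
   nor [q != 0] are needed. *)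
split; [|split; [|split; [|split]]].
- by move=> q _; apply: bigO_Re_expN1; exact: kfun_q_asymptotics.
- by move=> N; apply: bigO_Re_expN1; exact: kfun_N_asymptotics.
- move=> s; apply: bigO_Re_expN1; apply: eq_bigO_expN (kfun_pm_asymptotics a nu s hm hth') => t.
  by rewrite !kfunE /a; ring.
- by exists 2 => t; rewrite kfunE kfun_single /p_N !big_ord1 !ffunE /=; ring.
- apply: bigO_Re_expN1; apply: eq_bigO_expN (kfun_N_asymptotics a 1 hm hth') => t.
  by rewrite big_geq ?subr0.
Qed.
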